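(* Let $n\ge 2$. For every $c>0$ the quintuple $\big((z(n)+1)c,\;k(n)c,\;c,\;(z(n)+1)c,\;(k(n)+1)c\big)$ belongs to $\mathcal{C}$, and $$G\big((z(n)+1)c,k(n)c,c,(z(n)+1)c,(k(n)+1)c\big)=\widetilde G(n):=\frac{4}{(k(n)+1)^2}\Big(1+\frac{1}{z(n)}\Big).$$ In particular $\sup_{(a,b,c,d,\theta)\in\mathcal{C}}G(a,b,c,d,\theta)\ge \widetilde G(n)$.
   Context: A quintuple $(a,b,c,d,\theta)$ is admissible if $d\ge a>c>0$, $\theta>b\ge 0$, and $(a-c)^2\theta^2-a(\theta-b)\big[(2\theta+na)(a-c)+a(n-1)(\theta-b)\big]\ge 0$; $\mathcal{C}$ is the set of admissible quintuples. For $(a,b,c,d,\theta)\in\mathcal{C}$, $G=\min\{G_1,G_2\}$ with $G_1=\frac{4d(\theta-b)}{\theta^2}$ and $G_2$ the unique positive root $x$ of $(d-a)\theta^2x^2+(d-c)\theta^2x-4cd(\theta-b)=0$. Further, $k(n)=3\sqrt{n}\cos\big(\tfrac13\arccos(1/\sqrt n)\big)$ and $z(n)=\dfrac{k(n)^2-3n+\sqrt{k(n)^4-6nk(n)^2-6nk(n)}}{3n}$. *)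

From Stdlib Require Import Reals Lra Lia ClassicalEpsilon.
Open Scope R_scope.

Definition admissible (n : nat) (a b c d th : R) : Prop :=
  d >= a /\ a > c /\ c > 0 /\ th > b /\ b >= 0 /\
  (a - c)^2 * th^2
    - a * (th - b) * ((2 * th + INR n * a) * (a - c) + a * (INR n - 1) * (th - b))
  >= 0.

Definition G1 (a b c d th : R) : R := 4 * d * (th - b) / th^2.

Definition G2poly (a b c d th x : R) : R :=
  (d - a) * th^2 * x^2 + (d - c) * th^2 * x - 4 * c * d * (th - b).

(* G2 := the (unique, on C) positive root x of G2poly, chosen by Hilbert's epsilon. *)
Definition G2 (a b c d th : R) : R :=
  epsilon (inhabits 0) (fun x => 0 < x /\ G2poly a b c d th x = 0).

Definition G (a b c d th : R) : R := Rmin (G1 a b c d th) (G2 a b c d th).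

Definition kn (n : nat) : R :=
  3 * sqrt (INR n) * cos (acos (1 / sqrt (INR n)) / 3).

Definition zn (n : nat) : R :=
  (kn n ^ 2 - 3 * INR n
    + sqrt (kn n ^ 4 - 6 * INR n * kn n ^ 2 - 6 * INR n * kn n)) / (3 * INR n).

Definition Gtilde (n : nat) : R :=
  4 / (kn n + 1)^2 * (1 + 1 / zn n).

From Stdlib Require Import Reals Lra Psatz ClassicalEpsilon.
Open Scope R_scope.

(* The number k = k(n) is the trigonometric (Viète) form of the positive root
   of the cubic 4k^3 = 27 n (k + 1): with r = sqrt n and t = cos(acos(1/r)/3),
   the triple-angle formula 4t^3 - 3t = 1/r gives this relation for k = 3rt.
   Under the cubic, the discriminant in z(n) is the perfect square (k^2/3)^2,
   so z(n) collapses to (2k + 3)/k.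

   For the witness a = d = (z+1)c, b = kc, theta = (k+1)c the quadratic
   defining G2 degenerates (d = a) into a linear equation, whose unique
   positive root is computed explicitly; since a >= 2c this root is below G1,
   so G = G2 = Gtilde(n).  Admissibility reduces, after substituting the
   cubic for n, to an exact polynomial identity (the constraint is tight). *)

Lemma cos_triple (x : R) : cos (3 * x) = 4 * cos x ^ 3 - 3 * cos x.
Proof.
  replace (3 * x) with (2 * x + x) by ring.
  rewrite cos_plus, cos_2a, sin_2a.
  assert (Hsin2 : sin x * sin x = 1 - cos x * cos x).
  { pose proof (sin2_cos2 x) as H. unfold Rsqr in H. lra. }
  replace ((cos x * cos x - sin x * sin x) * cos x - 2 * sin x * cos x * sin x)
    with ((cos x * cos x - sin x * sin x) * cos x - 2 * (sin x * sin x) * cos x)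
    by ring.
  rewrite Hsin2. ring.
Qed.

Lemma viete_root (r : R) :
  1 <= r ->
  let k := 3 * r * cos (acos (1 / r) / 3) in
  0 < k /\ 4 * k ^ 3 = 27 * r ^ 2 * (k + 1).
Proof.
  intros Hr k.
  assert (Hinv : -1 <= 1 / r <= 1).
  { split; unfold Rdiv; rewrite Rmult_1_l.
    - assert (0 < / r) by (apply Rinv_0_lt_compat; lra). lra.
    - rewrite <- Rinv_1. apply Rinv_le_contravar; lra. }
  pose proof (acos_bound (1 / r)) as Hacos.
  set (t := cos (acos (1 / r) / 3)) in k.
  assert (Ht_pos : 0 < t).
  { apply cos_gt_0; pose proof PI_RGT_0; lra. }
  assert (Ht_cubic : r * (4 * t ^ 3 - 3 * t) = 1).
  { unfold t. rewrite <- cos_triple.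
    replace (3 * (acos (1 / r) / 3)) with (acos (1 / r)) by field.
    rewrite cos_acos by exact Hinv. field. lra. }
  unfold k. split.
  - apply Rmult_lt_0_compat; lra.
  - nra.
Qed.

Lemma kn_cubic (n : nat) :
  (2 <= n)%nat -> 0 < kn n /\ 4 * kn n ^ 3 = 27 * INR n * (kn n + 1).
Proof.
  intros hn.
  assert (HN : 2 <= INR n) by (apply (le_INR 2); exact hn).
  assert (Hsq : sqrt (INR n) ^ 2 = INR n) by (apply pow2_sqrt; lra).
  assert (Hr : 1 <= sqrt (INR n)).
  { rewrite <- sqrt_1. apply sqrt_le_1_alt. lra. }
  pose proof (viete_root _ Hr) as [Hk Hcubic].
  rewrite Hsq in Hcubic. unfold kn. auto.
Qed.

(* On the cubic, the discriminant in z(n) is the square (k^2/3)^2, whence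
   z(n) = (2k + 3)/k. *)
Lemma zn_closed_form (n : nat) : (2 <= n)%nat -> zn n = (2 * kn n + 3) / kn n.
Proof.
  intros hn. destruct (kn_cubic n hn) as [Hk Hcubic].
  assert (HN : 2 <= INR n) by (apply (le_INR 2); exact hn).
  unfold zn. set (k := kn n) in *. set (N := INR n) in *.
  assert (Hdisc : k ^ 4 - 6 * N * k ^ 2 - 6 * N * k = (k ^ 2 / 3) * (k ^ 2 / 3))
    by nra.
  rewrite Hdisc, sqrt_square by nra.
  field_simplify_eq; [nra | lra].
Qed.

Lemma G2_unique_root (a b c d th x0 : R) :
  0 < x0 -> G2poly a b c d th x0 = 0 ->
  (forall x, 0 < x -> G2poly a b c d th x = 0 -> x = x0) ->
  G2 a b c d th = x0.
Proof.
  intros Hpos Hroot Huniq. unfold G2.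
  set (P := fun x => 0 < x /\ G2poly a b c d th x = 0).
  destruct (epsilon_spec (inhabits 0) P (ex_intro P x0 (conj Hpos Hroot)))
    as [Hp Hr].
  exact (Huniq _ Hp Hr).
Qed.

Lemma G2_diagonal (a b c th : R) :
  0 < c < a -> b < th -> 0 < th ->
  G2 a b c a th = 4 * c * a * (th - b) / ((a - c) * th ^ 2).
Proof.
  intros Hca Hbth Hth.
  assert (Hden : 0 < (a - c) * th ^ 2) by (apply Rmult_lt_0_compat; nra).
  apply G2_unique_root.
  - apply Rdiv_lt_0_compat; [|exact Hden].
    repeat apply Rmult_lt_0_compat; lra.
  - unfold G2poly. field. lra.
  - intros x _ Hx. unfold G2poly in Hx.
    apply (Rmult_eq_reg_l ((a - c) * th ^ 2)); [|lra].
    field_simplify; [|lra]. nra.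
Qed.

(* On the diagonal d = a with a >= 2c, the minimum defining G is attained
   by G2 (indeed G2 = G1 * c / (a - c) <= G1). *)
Lemma G_diagonal (a b c th : R) :
  0 < c -> 2 * c <= a -> b < th -> 0 < th ->
  G a b c a th = 4 * c * a * (th - b) / ((a - c) * th ^ 2).
Proof.
  intros Hc Ha Hbth Hth.
  unfold G. rewrite G2_diagonal by lra.
  apply Rmin_right. unfold G1.
  assert (HG1 : 0 <= 4 * a * (th - b) / th ^ 2).
  { unfold Rdiv. apply Rmult_le_pos; [nra|].
    left. apply Rinv_0_lt_compat, pow_lt. lra. }
  replace (4 * c * a * (th - b) / ((a - c) * th ^ 2))
    with (c / (a - c) * (4 * a * (th - b) / th ^ 2)) by (field; split; lra).
  rewrite <- (Rmult_1_l (4 * a * (th - b) / th ^ 2)) at 2.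
  apply Rmult_le_compat_r; [exact HG1|].
  apply (Rmult_le_reg_r (a - c)); [lra|].
  field_simplify; lra.
Qed.

(* The closed form of z(n) exceeds 2, so the witness satisfies a >= 2c. *)
Lemma closed_z_gt_2 (k : R) : 0 < k -> 2 < (2 * k + 3) / k.
Proof.
  intros Hk. apply (Rmult_lt_reg_r k); [lra|]. field_simplify; lra.
Qed.

(* The witness quintuple with z = (2k + 3)/k is admissible whenever k > 0
   solves the cubic 4 k^3 = 27 n (k + 1); the constraint holds with equality. *)
Lemma witness_admissible (n : nat) (k c : R) :
  0 < k -> 4 * k ^ 3 = 27 * INR n * (k + 1) -> 0 < c ->
  let z := (2 * k + 3) / k in
  admissible n ((z + 1) * c) (k * c) c ((z + 1) * c) ((k + 1) * c).
Proof.
  intros Hk Hcubic Hc z.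
  pose proof (closed_z_gt_2 k Hk) as Hz. fold z in Hz.
  assert (HN : INR n = 4 * k ^ 3 / (27 * (k + 1))) by (field_simplify_eq; lra).
  unfold admissible. rewrite HN.
  repeat split; try nra.
  right. unfold z. field. lra.
Qed.

Theorem proposition1p6 (n : nat) (hn : (2 <= n)%nat) :
  (forall c : R, 0 < c ->
     admissible n ((zn n + 1) * c) (kn n * c) c ((zn n + 1) * c) ((kn n + 1) * c) /\
     G ((zn n + 1) * c) (kn n * c) c ((zn n + 1) * c) ((kn n + 1) * c) = Gtilde n) /\
  (forall u : R,
     (forall a b c d th : R, admissible n a b c d th -> G a b c d th <= u) ->
     Gtilde n <= u).
Proof.
  destruct (kn_cubic n hn) as [Hk Hcubic].
  assert (witness : forall c : R, 0 < c ->
     admissible n ((zn n + 1) * c) (kn n * c) c ((zn n + 1) * c) ((kn n + 1) * c) /\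
     G ((zn n + 1) * c) (kn n * c) c ((zn n + 1) * c) ((kn n + 1) * c) = Gtilde n).
  { intros c Hc. unfold Gtilde. rewrite (zn_closed_form n hn).
    set (k := kn n) in *.
    pose proof (closed_z_gt_2 k Hk) as Hz.
    split; [exact (witness_admissible n k c Hk Hcubic Hc)|].
    rewrite G_diagonal by nra.
    field. repeat split; nra. }
  split; [exact witness|].
  intros u Hu. destruct (witness 1 Rlt_0_1) as [Hadm HG].
  rewrite <- HG. apply Hu. exact Hadm.
Qed.
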